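(* Let $\lambda\in\mathbf{R}$ and $c>0$. Then there exists an integer $l\geq 0$ such that for every $f\in\mathcal{C}^{\lambda\text{-an}}(\mathbf{Z}_p^d,M)$ and every $1\leq i\leq d$ we have $\Delta_{p^l1_i}(f)\in\mathcal{C}^{\lambda\text{-an}}(\mathbf{Z}_p^d,M)$ and $$\mathrm{val}_{\lambda}(\Delta_{p^l 1_i}(f))\geq \mathrm{val}_{\lambda}(f)+c.$$
   Context: A valuation on a ring (or module) is a map $\mathrm{val}$ to $(-\infty,\infty]$ with $\mathrm{val}(x)=\infty$ iff $x=0$, $\mathrm{val}(xy)\geq\mathrm{val}(x)+\mathrm{val}(y)$ (for modules: $\mathrm{val}(rm)\geq \mathrm{val}(r)+\mathrm{val}(m)$) and $\mathrm{val}(x+y)\geq\min(\mathrm{val}(x),\mathrm{val}(y))$. Let $R$ be a $\mathbf{Z}_p$-algebra which is a Tate ring with a valuation $\mathrm{val}_R$ such that $\mathrm{val}_R(p)>0$, and let $M$ be an $R$-module with a compatible valuation $\mathrm{val}_M$. For $\underline{y}\in\mathbf{Z}_p^d$ and $f:\mathbf{Z}_p^d\to M$ put $\Delta_{\underline{y}}(f)(\underline{x})=f(\underline{x}+\underline{y})-f(\underline{x})$. Let $1_i\in\mathbf{Z}_p^d$ be the $i$-th standard basis vector, $\Delta_i=\Delta_{1_i}$, and for $\underline{n}\in\mathbf{Z}_{\geq0}^d$ put $\Delta^{\underline{n}}=\Delta_1^{n_1}\circ\cdots\circ\Delta_d^{n_d}$ and $a_{\underline{n}}(f)=\Delta^{\underline{n}}(f)(\underline{0})$.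 Write $|\underline{n}|=\sum_i n_i$ and $\lfloor p^\lambda\underline{n}\rfloor=\sum_i\lfloor p^\lambda n_i\rfloor$. Let $\mathcal{C}^{\lambda\text{-an}}(\mathbf{Z}_p^d,M)$ be the set of continuous $f:\mathbf{Z}_p^d\to M$ such that $\mathrm{val}_M(a_{\underline{n}}(f))-p^\lambda|\underline{n}|\to\infty$ as $|\underline{n}|\to\infty$, endowed with the valuation $\mathrm{val}_\lambda(f)=\inf_{\underline{n}}\big(\mathrm{val}_M(a_{\underline{n}}(f))-\lfloor p^\lambda\underline{n}\rfloor\big)$. *)

From HB Require Import structures.
From mathcomp Require Import all_boot all_order all_algebra.
From mathcomp Require Import all_classical all_reals all_analysis.
From mathcomp Require Import Rstruct.
Local Notation R := Rdefinitions.R.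
Set Implicit Arguments. Unset Strict Implicit. Unset Printing Implicit Defensive.
Import Order.TTheory GRing.Theory Num.Theory.
Local Open Scope ring_scope.

(* An element of Z_p is a sequence (a_k)_k with a_k in {0,..,p^k-1}
   representing its reduction mod p^k, compatible: a_{k+1} mod p^k = a_k.
   (For p > 0 the compatibility forces a_k < p^k and a_0 = 0.) *)
Definition Zp (p : nat) := {a : nat -> nat | forall k, (a k.+1 %% p ^ k = a k)%N}.

Definition zp_trunc (p : nat) (x : Zp p) (k : nat) : nat := proj1_sig x k.

Lemma zp_add_compat (p : nat) (x y : Zp p) :
  forall k, (((zp_trunc x k.+1 + zp_trunc y k.+1) %% p ^ k.+1) %% p ^ k)%N
            = ((zp_trunc x k + zp_trunc y k) %% p ^ k)%N.
Proof.
move=> k; case: x y => [a Ha] [b Hb] /=.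
rewrite modn_dvdm; last by rewrite dvdn_exp2l.
by rewrite -modnDm Ha Hb.
Qed.

Definition zp_add (p : nat) (x y : Zp p) : Zp p :=
  exist _ (fun k => ((zp_trunc x k + zp_trunc y k) %% p ^ k)%N) (zp_add_compat x y).

Lemma zp_of_nat_compat (p n : nat) : forall k, ((n %% p ^ k.+1) %% p ^ k)%N = (n %% p ^ k)%N.
Proof. by move=> k; rewrite modn_dvdm // dvdn_exp2l. Qed.

Definition zp_of_nat (p n : nat) : Zp p := exist _ (fun k => (n %% p ^ k)%N) (zp_of_nat_compat p n).

Arguments zp_of_nat : clear implicits.

Definition Zpd (p d : nat) := 'I_d -> Zp p.

Definition zpd_add (p d : nat) (x y : Zpd p d) : Zpd p d := fun j => zp_add (x j) (y j).

Definition zpd0 (p d : nat) : Zpd p d := fun _ => zp_of_nat p 0.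

Arguments zpd0 : clear implicits.

Definition zpd_basis (p d : nat) (i : 'I_d) (n : nat) : Zpd p d :=
  fun j => if j == i then zp_of_nat p n else zp_of_nat p 0.

Arguments zpd_basis p {d} i n.

Local Open Scope ereal_scope.

Definition ring_valuation (A : comNzRingType) (v : A -> \bar R) : Prop :=
  [/\ forall x, v x = +oo <-> x = 0%R,
      forall x, v x != -oo,
      forall x y, v x + v y <= v (x * y)%R
    & forall x y, mine (v x) (v y) <= v (x + y)%R].

Definition module_valuation (A : comNzRingType) (M : lmodType A)
  (vA : A -> \bar R) (vM : M -> \bar R) : Prop :=
  [/\ forall m, vM m = +oo <-> m = 0%R,
      forall m, vM m != -oo,
      forall r m, vA r + vM m <= vM (r *: m)%R
    & forall m n, mine (vM m) (vM n) <= vM (m + n)%R].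

Section Mahler.
Variables (p d : nat) (A : comNzRingType) (M : lmodType A).

Definition Delta (y : Zpd p d) (f : Zpd p d -> M) : Zpd p d -> M :=
  fun x => (f (zpd_add x y) - f x)%R.

Definition Delta_i (i : 'I_d) := Delta (zpd_basis p i 1).

Definition Delta_pow (n : 'I_d -> nat) (f : Zpd p d -> M) : Zpd p d -> M :=
  foldr (fun i g => iter (n i) (Delta_i i) \o g) id (enum 'I_d) f.

Definition mahler (f : Zpd p d -> M) (n : 'I_d -> nat) : M :=
  Delta_pow n f (zpd0 p d).

Definition nsize (n : 'I_d -> nat) : nat := (\sum_(i : 'I_d) n i)%N.

Variable vM : M -> \bar R.

(* continuity for the p-adic (product) topology on Z_p^d and the valuation
   topology on M *)
Definition zp_continuous (f : Zpd p d -> M) : Prop :=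
  forall (x : Zpd p d) (C : R), exists k : nat, forall y : Zpd p d,
    (forall j, zp_trunc (y j) k = zp_trunc (x j) k) ->
    (C%:E <= vM (f y - f x)%R).

Definition lam_an (lam : R) (f : Zpd p d -> M) : Prop :=
  zp_continuous f /\
  forall C : R, exists N : nat, forall n : 'I_d -> nat, (N <= nsize n)%N ->
    C%:E <= vM (mahler f n) - (((p%:R : R) `^ lam) * (nsize n)%:R)%:E.

(* floor(p^lambda n) = sum_i floor(p^lambda n_i) *)
Definition floor_sum (lam : R) (n : 'I_d -> nat) : R :=
  (\sum_(i : 'I_d) (Num.floor (((p%:R : R) `^ lam) * (n i)%:R))%:~R)%R.

Definition val_lam (lam : R) (f : Zpd p d -> M) : \bar R :=
  ereal_inf [set vM (mahler f n) - (floor_sum lam n)%:E | n in [set: 'I_d -> nat]].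

End Mahler.

From Pilot Require Import Defs.
From HB Require Import structures.
From mathcomp Require Import all_boot all_order all_algebra.
From mathcomp Require Import all_classical all_reals all_analysis.
From mathcomp Require Import Rstruct.
From mathcomp Require Import zify lra.
Local Notation R := Rdefinitions.R.
Set Implicit Arguments. Unset Strict Implicit. Unset Printing Implicit Defensive.
Import Order.TTheory GRing.Theory Num.Theory.
Local Open Scope ring_scope.

(* Newton's forward-difference formula gives
     a_n(Delta_{N 1_i} f) = sum_{1 <= k <= N} C(N, k) a_{n + k 1_i}(f).
   For N = p^l we have v_p(C(p^l, k)) >= l - v_p(k), while passing from the
   index n to n + k 1_i raises the weight floor(p^lambda n) by at least
   p^lambda k - 1.  For k < p^m the first gain is at least l - m, for k >= p^m
   the second one is at least p^(lambda + m) - 1, so a large l makes every term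
   gain c. *)

Section ZpArithmetic.
Variable p : nat.
Implicit Types x y z : Defs.Zp p.

Lemma zp_ext x y : (forall k, zp_trunc x k = zp_trunc y k) -> x = y.
Proof.
case: x y => [a Ha] [b Hb] /= eq_trunc.
have eq_ab : a = b by apply: funext.
by subst b; congr exist; apply: Prop_irrelevance.
Qed.

Lemma zp_trunc_mod x k k' : (k' <= k)%N -> (zp_trunc x k %% p ^ k')%N = zp_trunc x k'.
Proof.
case: x => a Ha /=; move/subnKC <-; elim: (k - k')%N => [|j IHj].
  by rewrite addn0 -(Ha k') modn_mod.
by rewrite addnS -IHj -(Ha (k' + j)%N) modn_dvdm // dvdn_exp2l ?leq_addr.
Qed.

Lemma zp_trunc_lt x k : (0 < p)%N -> (zp_trunc x k < p ^ k)%N.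
Proof. by move=> p_gt0; rewrite -(zp_trunc_mod x (leqnSn k)) ltn_mod expn_gt0 p_gt0. Qed.

Lemma zp_addC x y : zp_add x y = zp_add y x.
Proof. by apply: zp_ext => k /=; rewrite addnC. Qed.

Lemma zp_addA x y z : zp_add x (zp_add y z) = zp_add (zp_add x y) z.
Proof. by apply: zp_ext => k /=; rewrite modnDml modnDmr addnA. Qed.

Lemma zp_add_of_nat a b : zp_add (zp_of_nat p a) (zp_of_nat p b) = zp_of_nat p (a + b).
Proof. by apply: zp_ext => k /=; rewrite modnDm. Qed.

Lemma zp_addr0 x : (0 < p)%N -> zp_add x (zp_of_nat p 0) = x.
Proof.
move=> p_gt0; apply: zp_ext => k.
by rewrite /= mod0n addn0 modn_small ?zp_trunc_lt.
Qed.

End ZpArithmetic.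

Section ZpdArithmetic.
Variables (p d : nat).
Implicit Types x y z : Zpd p d.

Lemma zpd_addAC x y z : zpd_add (zpd_add x y) z = zpd_add (zpd_add x z) y.
Proof. by apply: funext => j; rewrite /zpd_add -!zp_addA [zp_add (y j) _]zp_addC. Qed.

Lemma zpd_add_basis x (i : 'I_d) a b :
  zpd_add (zpd_add x (zpd_basis p i a)) (zpd_basis p i b) = zpd_add x (zpd_basis p i (a + b)).
Proof.
apply: funext => j; rewrite /zpd_add /zpd_basis -zp_addA.
by case: (j == i); rewrite zp_add_of_nat.
Qed.

Lemma zpd_addr_basis0 x (i : 'I_d) : (0 < p)%N -> zpd_add x (zpd_basis p i 0) = x.
Proof. by move=> p_gt0; apply: funext => j; rewrite /zpd_add /zpd_basis if_same zp_addr0. Qed.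

End ZpdArithmetic.

Lemma iter_commute (T : Type) (D E : T -> T) k t :
  (forall u, D (E u) = E (D u)) -> iter k D (E t) = E (iter k D t).
Proof. by move=> DE; elim: k => //= k ->; rewrite DE. Qed.

Lemma sum_pascal (V : zmodType) (a : nat -> V) N :
  \sum_(k < N.+1) (a k + a k.+1) *+ 'C(N, k) = \sum_(k < N.+2) a k *+ 'C(N.+1, k).
Proof.
rewrite [RHS]big_ord_recl /=.
under [X in _ = _ + X]eq_bigr => k _ do rewrite /bump /= add1n binS mulrnDr.
rewrite big_split /= addrA; under eq_bigr => k _ do rewrite mulrnDl.
rewrite big_split /=; congr (_ + _).
rewrite big_ord_recl big_ord_recr /= !bin0 bin_small // mulr0n addr0.
by under eq_bigr => k _ do rewrite /bump /= add1n.
Qed.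

Definition nshift (d : nat) (n : 'I_d -> nat) (i : 'I_d) (k : nat) : 'I_d -> nat :=
  fun j => (n j + (j == i) * k)%N.

Lemma nsize_nshift (d : nat) (n : 'I_d -> nat) i k :
  nsize (nshift n i k) = (nsize n + k)%N.
Proof.
rewrite /nsize /nshift big_split /=; congr (_ + _)%N.
by rewrite (bigD1 i) //= eqxx mul1n big1 ?addn0 // => j /negbTE ->.
Qed.

Section FiniteDifferences.
Variables (p d : nat) (A : comNzRingType) (M : lmodType A).
Implicit Types (f h : Zpd p d -> M) (x y z : Zpd p d).

Lemma DeltaC y z f : Delta y (Delta z f) = Delta z (Delta y f).
Proof.
by apply: funext => x; rewrite /Delta zpd_addAC !opprD !opprK addrACA.
Qed.

Lemma Delta_pow_Delta n y f : Delta_pow n (Delta y f) = Delta y (Delta_pow n f).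
Proof.
rewrite /Delta_pow; elim: (enum 'I_d) => //= j s ->.
by rewrite iter_commute // => g; rewrite /Delta_i DeltaC.
Qed.

Lemma Delta_pow_nshift n i k f :
  Delta_pow (nshift n i k) f = iter k (Delta_i i) (Delta_pow n f).
Proof.
rewrite /Delta_pow.
suff -> : forall s, foldr (fun j g => iter (nshift n i k j) (Delta_i j) \o g) id s f =
  iter (k * count_mem i s) (Delta_i i) (foldr (fun j g => iter (n j) (Delta_i j) \o g) id s f).
  by rewrite count_uniq_mem ?enum_uniq // mem_enum muln1.
elim=> [|j s IHs] /=; first by rewrite muln0.
rewrite IHs /nshift; case: eqVneq => [->|ji] /=.
  by rewrite mul1n -!iterD; congr (iter _ _ _); lia.
rewrite mul0n addn0 add0n iter_commute // => g.
by rewrite iter_commute // => u; rewrite /Delta_i DeltaC.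
Qed.

Lemma newton_forward_difference h (i : 'I_d) x N : (0 < p)%N ->
  h (zpd_add x (zpd_basis p i N)) = \sum_(k < N.+1) iter k (Delta_i i) h x *+ 'C(N, k).
Proof.
move=> p_gt0; elim: N x => [|N IHN] x.
  by rewrite zpd_addr_basis0 // big_ord_recl big_ord0 /= addr0 mulr1n.
rewrite -add1n -zpd_add_basis IHN -(sum_pascal (fun k => iter k (Delta_i i) h x)).
by apply: eq_bigr => k _; rewrite iterS {2}/Delta_i /Delta addrC subrK.
Qed.

Lemma mahler_Delta_basis f (i : 'I_d) N n : (0 < p)%N ->
  mahler (Delta (zpd_basis p i N) f) n =
  \sum_(k < N) mahler f (nshift n i k.+1) *+ 'C(N, k.+1).
Proof.
move=> p_gt0; rewrite /mahler Delta_pow_Delta {1}/Delta newton_forward_difference //.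
rewrite big_ord_recl /= bin0 mulr1n addrC addKr.
by apply: eq_bigr => k _; rewrite Delta_pow_nshift.
Qed.

End FiniteDifferences.

Lemma logn_bin p n k : prime p -> (0 < k <= n)%N ->
  (logn p n - logn p k <= logn p 'C(n, k))%N.
Proof.
move=> p_pr /andP[k_gt0 le_kn].
have n_gt0 : (0 < n)%N by apply: leq_trans le_kn.
have diag : (n * 'C(n.-1, k.-1) = k * 'C(n, k))%N by rewrite mul_bin_diag prednK.
have Cn_gt0 : (0 < 'C(n, k))%N by rewrite bin_gt0.
have Cn1_gt0 : (0 < 'C(n.-1, k.-1))%N by rewrite bin_gt0 -ltnS !prednK.
by have := congr1 (logn p) diag; rewrite !lognM //; lia.
Qed.

Lemma pfactor_logn_le p k : prime p -> (0 < k)%N -> (p ^ logn p k <= k)%N.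
Proof. by move=> _ k_gt0; apply: dvdn_leq => //; apply: pfactor_dvdnn. Qed.

Lemma exists_natr_mul_ge (a x : R) : 0 < a -> exists n : nat, x <= n%:R * a.
Proof.
move=> a_gt0; exists (Num.Def.archi_bound (`|x| / a)).
have := archi_boundP (divr_ge0 (normr_ge0 x) (ltW a_gt0)).
by rewrite ltr_pdivrMr // => /ltW; apply: le_trans (ler_norm x).
Qed.

Lemma exists_exponent_bound p (K a P : R) : prime p -> 0 < a -> 0 < P ->
  exists l, forall k, (0 < k <= p ^ l)%N ->
    K <= (l - logn p k)%N%:R * a + P * k%:R.
Proof.
move=> p_pr a_gt0 P_gt0.
have [m0 K_le_m0P] := exists_natr_mul_ge K P_gt0.
have [L K_le_La] := exists_natr_mul_ge K a_gt0.
exists (m0 + L)%N => k /andP[k_gt0 _].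
have La_ge0 : 0 <= (m0 + L - logn p k)%N%:R * a by rewrite mulr_ge0 // ltW.
have Pk_ge0 : 0 <= P * k%:R by rewrite mulr_ge0 // ltW.
(* either [k >= p ^ m0], so [P k] is large, or [l - logn p k >= L] *)
case: (leqP m0 (logn p k)) => [le_m0_logk | lt_logk_m0].
  suff : m0%:R * P <= P * k%:R by lra.
  rewrite mulrC ler_pM2l // ler_nat.
  apply: leq_trans (pfactor_logn_le p_pr k_gt0).
  by apply: leq_trans (ltnW (ltn_expl _ (prime_gt1 p_pr))) _; rewrite leq_pexp2l ?prime_gt0.
suff : L%:R * a <= (m0 + L - logn p k)%N%:R * a by lra.
by rewrite ler_pM2r // ler_nat; lia.
Qed.

Section FloorSum.
Variables (p d : nat) (lam : R).
Local Notation P := ((p%:R : R) `^ lam).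

Lemma floor_sum_nshift (n : 'I_d -> nat) i k :
  floor_sum p lam n + P * k%:R - 1 <= floor_sum p lam (nshift n i k).
Proof.
rewrite /floor_sum (bigD1 i) //= [X in _ <= X](bigD1 i) //=.
under [X in _ <= _ + X]eq_bigr => j /negbTE j_neq_i do rewrite /nshift j_neq_i mul0n addn0.
rewrite /nshift eqxx mul1n natrD mulrDr.
have := floor_le (P * (n i)%:R); have := floorD1_gt (P * (n i)%:R + P * k%:R).
rewrite intrD; lra.
Qed.

End FloorSum.

Local Open Scope ereal_scope.

Section Valuations.
Variables (A : comNzRingType) (M : lmodType A) (vA : A -> \bar R) (vM : M -> \bar R).
Hypotheses (hvA : ring_valuation vA) (hvM : module_valuation vA vM).

Lemma valA_fin_num (x : A) : x != 0%R -> vA x \is a fin_num.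
Proof.
case: hvA => vA_oo vA_Noo _ _ x_neq0; rewrite fin_numE vA_Noo /=.
by apply/eqP => /vA_oo /eqP; rewrite (negbTE x_neq0).
Qed.

Lemma valA_mul (x y : A) : vA x + vA y <= vA (x * y).
Proof. by case: hvA. Qed.

Lemma valA_natr m : vA 1 <= vA m%:R.
Proof.
case: hvA => vA_oo _ _ vAD; elim: m => [|m IHm]; first by rewrite (vA_oo 0%R).2 ?leey.
by rewrite mulrS; apply: le_trans (vAD _ _); rewrite le_min lexx IHm.
Qed.

Lemma valA_exp (x : A) (a : R) e : a%:E <= vA x ->
  (e%:R * a + fine (vA 1))%:E <= vA (x ^+ e).
Proof.
move=> a_le; elim: e => [|e IHe].
  by rewrite mul0r add0r expr0 fineK ?valA_fin_num ?oner_neq0.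
rewrite exprS; apply: le_trans (valA_mul _ _); apply: le_trans (leeD a_le IHe).
by rewrite -EFinD lee_fin -natr1 mulrDl mul1r addrCA addrA.
Qed.

Lemma valM_scale (r : A) (m : M) : vA r + vM m <= vM (r *: m).
Proof. by case: hvM. Qed.

Lemma valM_natmul k (m : M) : vA k%:R + vM m <= vM (m *+ k).
Proof. by rewrite -scaler_nat; apply: valM_scale. Qed.

Lemma valM_sum (I : Type) (r : seq I) (P : pred I) (F : I -> M) B :
  (forall i, P i -> B <= vM (F i)) -> B <= vM (\sum_(i <- r | P i) F i).
Proof.
case: hvM => vM_oo _ _ vMD F_ge; apply: (big_ind (fun m => B <= vM m)) => //.
  by rewrite (vM_oo 0%R).2 ?leey.
by move=> m m' Bm Bm'; apply: le_trans (vMD _ _); rewrite le_min Bm Bm'.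
Qed.

Lemma valM_sub (C : R) (m m' : M) :
  (C + `|fine (vA (-1))|)%:E <= vM m -> (C + `|fine (vA (-1))|)%:E <= vM m' ->
  C%:E <= vM (m - m').
Proof.
case: hvM => _ _ _ vMD m_ge m'_ge.
have vAN1 : vA (-1) = (fine (vA (-1)))%:E by rewrite fineK ?valA_fin_num ?oppr_eq0 ?oner_neq0.
apply: le_trans (vMD _ _); rewrite le_min; apply/andP; split.
  by apply: le_trans m_ge; rewrite lee_fin lerDl.
rewrite -scaleN1r; apply: le_trans (valM_scale _ _); rewrite vAN1.
apply: le_trans (leeD2l _ m'_ge); rewrite -EFinD lee_fin.
by have := ler_norm (- fine (vA (-1))); rewrite normrN; lra.
Qed.

Lemma valA_bin p (a : R) n k : prime p -> a%:E <= vA p%:R -> (0 < k <= n)%N ->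
  ((logn p n - logn p k)%N%:R * a + fine (vA 1) + fine (vA 1))%:E <= vA 'C(n, k)%:R.
Proof.
move=> p_pr a_le k_range; have /andP[_ le_kn] := k_range.
have /dvdnP[q ->] : (p ^ (logn p n - logn p k) %| 'C(n, k))%N.
  by rewrite pfactor_dvdn ?bin_gt0 ?logn_bin.
rewrite natrM natrX; apply: le_trans (valA_mul _ _).
have vAq_ge : (fine (vA 1))%:E <= vA q%:R.
  by rewrite fineK ?valA_fin_num ?oner_neq0 ?valA_natr.
apply: le_trans (leeD vAq_ge (valA_exp _ a_le)); rewrite -EFinD lee_fin; lra.
Qed.

End Valuations.

Section DeltaEstimates.
Variables (p d : nat) (A : comNzRingType) (M : lmodType A).
Variables (vA : A -> \bar R) (vM : M -> \bar R).
Hypotheses (hvA : ring_valuation vA) (hvM : module_valuation vA vM).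
Variables (lam : R) (i : 'I_d) (N : nat).
Hypothesis p_gt0 : (0 < p)%N.
Local Notation P := ((p%:R : R) `^ lam)%R.
Implicit Types f : Zpd p d -> M.

Lemma val_lam_le f n : val_lam vM lam f <= vM (mahler f n) - (floor_sum p lam n)%:E.
Proof. by apply: ge_ereal_inf; exists (vM (mahler f n) - (floor_sum p lam n)%:E) => //; exists n. Qed.

Lemma zp_continuous_Delta y f : zp_continuous vM f -> zp_continuous vM (Delta y f).
Proof.
move=> f_cont x C; set C' := (C + `|fine (vA (-1))|)%R.
have [k1 near_xy] := f_cont (zpd_add x y) C'.
have [k2 near_x] := f_cont x C'.
have trunc_eq k (z : Zpd p d) : (k <= maxn k1 k2)%N ->
    (forall j, zp_trunc (z j) (maxn k1 k2) = zp_trunc (x j) (maxn k1 k2)) ->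
  forall j, zp_trunc (z j) k = zp_trunc (x j) k.
  by move=> le_k eq_z j; rewrite -(zp_trunc_mod (z j) le_k) -(zp_trunc_mod (x j) le_k) eq_z.
exists (maxn k1 k2) => z z_near; rewrite /Delta.
have -> : (f (zpd_add z y) - f z - (f (zpd_add x y) - f x) =
    (f (zpd_add z y) - f (zpd_add x y)) - (f z - f x))%R.
  by rewrite !opprD !opprK addrACA.
apply: (valM_sub hvA hvM); last by apply: near_x; apply: trunc_eq z_near; apply: leq_maxr.
by apply: near_xy => j /=; rewrite (trunc_eq _ _ (leq_maxl _ _) z_near).
Qed.

Lemma lam_an_Delta_basis f : lam_an vM lam f -> lam_an vM lam (Delta (zpd_basis p i N) f).
Proof.
move=> [f_cont f_decay]; split; first exact: zp_continuous_Delta.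
move=> C; have [N0 decay_N0] := f_decay (C - fine (vA 1))%R.
exists N0 => n le_N0n; rewrite mahler_Delta_basis // leeBrDr // -EFinD.
apply: (valM_sum hvM) => k _; apply: le_trans (valM_natmul hvM _ _).
have le_N0 : (N0 <= nsize (nshift n i k.+1))%N.
  by rewrite nsize_nshift (leq_trans le_N0n) ?leq_addr.
have := decay_N0 _ le_N0; rewrite nsize_nshift leeBrDr // -EFinD => f_ge.
apply: le_trans (leeD (_ : (fine (vA 1))%:E <= _) f_ge); last first.
  by rewrite fineK ?valA_fin_num ?oner_neq0 ?valA_natr.
rewrite -EFinD lee_fin natrD mulrDr.
have : (0 <= P * k.+1%:R)%R by rewrite mulr_ge0 ?powR_ge0.
lra.
Qed.

Lemma val_lam_Delta_basis (e : R) f :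
  (forall k : 'I_N, (e + 1 - P * k.+1%:R)%:E <= vA 'C(N, k.+1)%:R) ->
  val_lam vM lam f + e%:E <= val_lam vM lam (Delta (zpd_basis p i N) f).
Proof.
move=> vA_bin_ge; apply/ereal_infP => _ [n _ <-].
rewrite leeBrDr // mahler_Delta_basis //.
apply: (valM_sum hvM) => k _; apply: le_trans (valM_natmul hvM _ _).
have := val_lam_le f (nshift n i k.+1); rewrite leeBrDr // => f_ge.
apply: le_trans (leeD (vA_bin_ge k) f_ge).
rewrite -addeA -EFinD addeCA -EFinD; apply: leeD2l; rewrite lee_fin.
by have := floor_sum_nshift p lam n i k.+1; lra.
Qed.

End DeltaEstimates.

Theorem lemma2p6 (p : nat) (pp : prime p) (d : nat)
  (A : comNzRingType) (M : lmodType A)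
  (vA : A -> \bar R) (vM : M -> \bar R)
  (hvA : ring_valuation vA) (hvM : module_valuation vA vM)
  (hTate : exists w w' : A, (w * w' = 1)%R /\ 0 < vA w)
  (hp : 0 < vA (p%:R)%R)
  (lam c : R) (hc : (0 < c)%R) :
  exists l : nat, forall f : Zpd p d -> M, lam_an vM lam f ->
    forall i : 'I_d,
      lam_an vM lam (Delta (zpd_basis p i (p ^ l)%N) f) /\
      val_lam vM lam f + c%:E <= val_lam vM lam (Delta (zpd_basis p i (p ^ l)%N) f).
Proof.
have p_gt0 := prime_gt0 pp.
have [a a_gt0 a_le] : exists2 a : R, (0 < a)%R & a%:E <= vA p%:R.
  by move: hp; case: (vA p%:R) => [r r_gt0 | _ |] //; [exists r | exists 1%R; rewrite ?leey].
have P_gt0 : (0 < (p%:R : R) `^ lam)%R by rewrite powR_gt0 ?ltr0n.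
have [l l_large] := exists_exponent_bound (c + 1 - fine (vA 1) - fine (vA 1))%R pp a_gt0 P_gt0.
exists l => f f_an i; split; first exact: (lam_an_Delta_basis hvA hvM).
apply: (val_lam_Delta_basis hvM) => // k.
apply: le_trans (valA_bin hvA pp a_le _); last by rewrite ltn0Sn ltn_ord.
rewrite pfactorK // lee_fin.
by have := l_large k.+1; rewrite ltn0Sn ltn_ord => /(_ isT); lra.
Qed.
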